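(* Consider the Saint-Venant–Exner system with state $\mathbf{u}=(h,hv,b)^T$, $h>0$, velocity $v=hv/h$, constants $g>0$, $r>0$, a $C^1$ sediment discharge $q_b=q_b(h,hv)$ and a function $h_b=h_b(h,hv)$ with $q_b=v\,h_b$. Let $$\mathbf{f}(\mathbf{u})=(hv,\;hv^2,\;q_b)^T,\qquad \mathbf{B}(\mathbf{u})=\begin{pmatrix}0&0&0\\ g(h+h_b)&0&g(h+\tfrac1r h_b)\\0&0&0\end{pmatrix},\qquad \mathbf{z}(\mathbf{u})=(h,h_b,b)^T,$$ entropy $S=\tfrac12 rhv^2+\tfrac12 g(rh^2+b^2)+rghb$, entropy flux $q=rhv(\tfrac{v^2}{2}+g(h+b))+gq_b(rh+b)$, entropy variables $\mathbf{w}=(r(g(h+b)-\tfrac{v^2}{2}),\;rv,\;g(rh+b))^T$, and $\mathbf{A}=\mathbf{f}_{\mathbf{u}}+\mathbf{B}$. Define $$\mathbf{f}^*(\mathbf{u}_L,\mathbf{u}_R)=\big(\{\!\{hv\}\!\},\;\{\!\{hv\}\!\}\{\!\{v\}\!\},\;\{\!\{q_b\}\!\}\big)^T,$$ $$\mathbf{D}^-(\mathbf{u}_L,\mathbf{u}_R)=\tfrac12\mathbf{B}(\mathbf{u}_L)[\![\mathbf{z}]\!]+\mathbf{f}^*-\mathbf{f}(\mathbf{u}_L),\qquad \mathbf{D}^+(\mathbf{u}_L,\mathbf{u}_R)=\tfrac12\mathbf{B}(\mathbf{u}_R)[\![\mathbf{z}]\!]+\mathbf{f}(\mathbf{u}_R)-\mathbf{f}^*.$$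 Then for all admissible $\mathbf{u},\mathbf{u}_L,\mathbf{u}_R$: (i) $\mathbf{D}^\pm(\mathbf{u},\mathbf{u})=0$; (ii) $\mathbf{D}^-(\mathbf{u}_L,\mathbf{u}_R)=-\mathbf{D}^+(\mathbf{u}_R,\mathbf{u}_L)$; (iii) $\mathbf{w}(\mathbf{u}_L)^T\mathbf{D}^-(\mathbf{u}_L,\mathbf{u}_R)+\mathbf{w}(\mathbf{u}_R)^T\mathbf{D}^+(\mathbf{u}_L,\mathbf{u}_R)=q(\mathbf{u}_R)-q(\mathbf{u}_L)$; (iv) $\frac{\partial\mathbf{D}^-(\mathbf{u}_L,\mathbf{u}_R)}{\partial\mathbf{u}_R}\big|_{\mathbf{u}_R=\mathbf{u}_L}=\frac12\mathbf{A}(\mathbf{u}_L)$; (v) $\mathbf{D}^-+\mathbf{D}^+=[\![\mathbf{f}]\!]+\tfrac12(\mathbf{B}(\mathbf{u}_L)+\mathbf{B}(\mathbf{u}_R))[\![\mathbf{z}]\!]$, whose second component equals $g(\{\!\{h\}\!\}+\{\!\{h_b\}\!\})[\![h]\!]+g(\{\!\{h\}\!\}+\tfrac1r\{\!\{h_b\}\!\})[\![b]\!]$.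
   Context: Notation: for a quantity $a$ evaluated at two states, $[\![a]\!]=a_R-a_L$ and $\{\!\{a\}\!\}=\tfrac12(a_L+a_R)$. The system written is $\mathbf{u}_t+\mathbf{f}(\mathbf{u})_x+\mathbf{B}(\mathbf{u})\mathbf{u}_x=0$ (friction source omitted), i.e. $h_t+(hv)_x=0$, $(hv)_t+(hv^2)_x+gh(h+b)_x+\frac1r gh_b(rh+b)_x=0$, $b_t+(q_b)_x=0$; $h$ is water height, $b$ sediment height, $r$ the fluid/sediment density ratio, $h_b$ the active sediment height. *)

From Stdlib Require Import Reals.
From Coquelicot Require Import Coquelicot.
Open Scope R_scope.

Inductive idx := I1 | I2 | I3.

Definition vec := idx -> R.
Definition mat := idx -> idx -> R.

Definition mk3 (a b c : R) : vec :=
  fun i => match i with I1 => a | I2 => b | I3 => c end.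

Definition matvec (M : mat) (x : vec) : vec :=
  fun i => M i I1 * x I1 + M i I2 * x I2 + M i I3 * x I3.

Definition dot (x y : vec) : R := x I1 * y I1 + x I2 * y I2 + x I3 * y I3.

Definition unitv (j : idx) : vec := fun i => if (match i, j with
  | I1, I1 | I2, I2 | I3, I3 => true | _, _ => false end) then 1 else 0.
Definition shift (u : vec) (j : idx) (t : R) : vec := fun i => u i + t * unitv j i.

Definition jump (aL aR : R) : R := aR - aL.
Definition avg (aL aR : R) : R := (aL + aR) / 2.

Definition hh (u : vec) : R := u I1.
Definition hv (u : vec) : R := u I2.
Definition bb (u : vec) : R := u I3.
Definition vel (u : vec) : R := hv u / hh u.

Definition admissible (u : vec) : Prop := 0 < hh u.

Section SVE.
Variables (g r : R) (qb hb : R -> R -> R).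

Definition qbu (u : vec) : R := qb (hh u) (hv u).
Definition hbu (u : vec) : R := hb (hh u) (hv u).

Definition flux (u : vec) : vec := mk3 (hv u) (hv u * vel u) (qbu u).

Definition Bmat (u : vec) : mat := fun i j =>
  match i, j with
  | I2, I1 => g * (hh u + hbu u)
  | I2, I3 => g * (hh u + / r * hbu u)
  | _, _ => 0
  end.

Definition zvar (u : vec) : vec := mk3 (hh u) (hbu u) (bb u).

Definition entropy (u : vec) : R :=
  / 2 * r * hh u * vel u ^ 2 + / 2 * g * (r * hh u ^ 2 + bb u ^ 2) + r * g * hh u * bb u.

Definition eflux (u : vec) : R :=
  r * hv u * (vel u ^ 2 / 2 + g * (hh u + bb u)) + g * qbu u * (r * hh u + bb u).

Definition wvar (u : vec) : vec :=
  mk3 (r * (g * (hh u + bb u) - vel u ^ 2 / 2)) (r * vel u) (g * (r * hh u + bb u)).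

Definition flux_jac (u : vec) : mat := fun i j =>
  Derive (fun t => flux (shift u j t) i) 0.
Definition Amat (u : vec) : mat := fun i j => flux_jac u i j + Bmat u i j.

Definition jumpz (uL uR : vec) : vec := fun i => jump (zvar uL i) (zvar uR i).

Definition fstar (uL uR : vec) : vec :=
  mk3 (avg (hv uL) (hv uR))
      (avg (hv uL) (hv uR) * avg (vel uL) (vel uR))
      (avg (qbu uL) (qbu uR)).

Definition DminusSVE (uL uR : vec) : vec := fun i =>
  / 2 * matvec (Bmat uL) (jumpz uL uR) i + fstar uL uR i - flux uL i.

Definition DplusSVE (uL uR : vec) : vec := fun i =>
  / 2 * matvec (Bmat uR) (jumpz uL uR) i + flux uR i - fstar uL uR i.

End SVE.

Definition C1_on_admissible (qb : R -> R -> R) : Prop :=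
  forall h m, 0 < h ->
    ex_derive (fun x => qb x m) h /\ ex_derive (fun y => qb h y) m /\
    continuity_2d_pt (fun x y => Derive (fun x' => qb x' y) x) h m /\
    continuity_2d_pt (fun x y => Derive (fun y' => qb x y') y) h m.

From Stdlib Require Import Reals FunctionalExtensionality.
From Coquelicot Require Import Coquelicot.
Open Scope R_scope.

(* (i), (ii), (v) and entropy conservation (iii) are rational identities in the two
   states once q_b is written as v h_b.  For (iv), differentiate D^-(u_L, u_R) in u_R
   at u_R = u_L: an average {{a}} contributes half the derivative of a, the product
   {{hv}}{{v}} contributes half the derivative of hv v by the product rule, and
   B(u_L)[[z]] contributes B(u_L) itself because the second column of B vanishes, so
   the h_b component of z (which need not be differentiable) never matters. *)

Lemma shift_0 (u : vec) (j : idx) : shift u j 0 = u.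
Proof. extensionality i; unfold shift; ring. Qed.

Lemma is_derive_shift (u : vec) (j k : idx) :
  is_derive (fun t => shift u j t k) 0 (unitv j k).
Proof. unfold shift; auto_derive; [exact I | ring]. Qed.

Lemma is_derive_avg_shift (F : vec -> R) (u : vec) (j : idx) (d : R) :
  is_derive (fun t => F (shift u j t)) 0 d ->
  is_derive (fun t => avg (F u) (F (shift u j t))) 0 (/ 2 * d).
Proof.
intro HF.
pose proof (is_derive_scal _ _ (/ 2) _
  (is_derive_plus _ _ _ _ _ (is_derive_const (F u) 0) HF)) as H.
rewrite plus_zero_l in H.
exact (is_derive_ext _ _ _ _ (fun t => Rmult_comm _ _) H).
Qed.

Lemma is_derive_mult_shift (F G : vec -> R) (u : vec) (j : idx) (dF dG : R) :
  is_derive (fun t => F (shift u j t)) 0 dF ->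
  is_derive (fun t => G (shift u j t)) 0 dG ->
  is_derive (fun t => F (shift u j t) * G (shift u j t)) 0 (dF * G u + F u * dG).
Proof.
intros HF HG.
pose proof (is_derive_mult _ _ _ _ _ HF HG Rmult_comm) as H.
cbv beta in H; rewrite shift_0 in H; exact H.
Qed.

Lemma is_derive_avg_mult_shift (F G : vec -> R) (u : vec) (j : idx) (dF dG : R) :
  is_derive (fun t => F (shift u j t)) 0 dF ->
  is_derive (fun t => G (shift u j t)) 0 dG ->
  is_derive (fun t => avg (F u) (F (shift u j t)) * avg (G u) (G (shift u j t))) 0
    (/ 2 * (dF * G u + F u * dG)).
Proof.
intros HF HG.
pose proof (is_derive_mult _ _ _ _ _
  (is_derive_avg_shift F u j dF HF) (is_derive_avg_shift G u j dG HG) Rmult_comm) as H.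
cbv beta in H; rewrite shift_0 in H.
replace (/ 2 * (dF * G u + F u * dG))
  with (plus (mult (/ 2 * dF) (avg (G u) (G u))) (mult (avg (F u) (F u)) (/ 2 * dG)));
  [exact H |].
unfold plus, mult, avg; simpl; field.
Qed.

Lemma ex_derive_hv_shift (u : vec) (j : idx) : ex_derive (fun t => hv (shift u j t)) 0.
Proof. eexists; apply is_derive_shift. Qed.

Lemma ex_derive_vel_shift (u : vec) (j : idx) :
  admissible u -> ex_derive (fun t => vel (shift u j t)) 0.
Proof.
intro Hu; apply ex_derive_div; try (eexists; apply is_derive_shift).
rewrite shift_0; apply Rgt_not_eq, Hu.
Qed.

Lemma ex_derive_qbu_shift (qb : R -> R -> R) (u : vec) (j : idx) :
  C1_on_admissible qb -> admissible u -> ex_derive (fun t => qbu qb (shift u j t)) 0.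
Proof.
intros HC Hu; destruct (HC (hh u) (hv u) Hu) as [Hx [Hy _]].
unfold qbu, hh, hv, shift, unitv in *; destruct j; cbv beta iota.
- apply (ex_derive_ext (fun t => qb (u I1 + t) (u I2))); [intro; f_equal; ring |].
  apply (ex_derive_comp (fun x => qb x (u I2))); [rewrite Rplus_0_r; exact Hx |].
  auto_derive; exact I.
- apply (ex_derive_ext (fun t => qb (u I1) (u I2 + t))); [intro; f_equal; ring |].
  apply (ex_derive_comp (qb (u I1))); [rewrite Rplus_0_r; exact Hy |].
  auto_derive; exact I.
- apply (ex_derive_ext (fun _ => qb (u I1) (u I2))); [intro; f_equal; ring |].
  apply ex_derive_const.
Qed.

Section SaintVenantExner.
Variables (g r : R) (qb hb : R -> R -> R).

Local Notation Dminus := (DminusSVE g r qb hb).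
Local Notation Dplus := (DplusSVE g r qb hb).
Local Notation B := (Bmat g r hb).

Lemma matvec_Bmat_jumpz (w u v : vec) (i : idx) :
  matvec (B w) (jumpz hb u v) i
  = B w i I1 * jump (hh u) (hh v) + B w i I3 * jump (bb u) (bb v).
Proof. unfold matvec, Bmat, jumpz, zvar, mk3; destruct i; cbv beta iota; ring. Qed.

Lemma matvec_Bmat_jumpz_diag (u : vec) (i : idx) : matvec (B u) (jumpz hb u u) i = 0.
Proof. rewrite matvec_Bmat_jumpz; unfold jump; ring. Qed.

Lemma fstar_diag (u : vec) (i : idx) : fstar qb u u i = flux qb u i.
Proof. unfold fstar, flux, mk3, avg; destruct i; field. Qed.

Lemma DminusSVE_diag (u : vec) (i : idx) : Dminus u u i = 0.
Proof. unfold DminusSVE; rewrite matvec_Bmat_jumpz_diag, fstar_diag; ring. Qed.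

Lemma DplusSVE_diag (u : vec) (i : idx) : Dplus u u i = 0.
Proof. unfold DplusSVE; rewrite matvec_Bmat_jumpz_diag, fstar_diag; ring. Qed.

Lemma DminusSVE_swap (uL uR : vec) (i : idx) : Dminus uL uR i = - Dplus uR uL i.
Proof.
unfold DminusSVE, DplusSVE, fstar, matvec, jumpz, jump, avg, mk3.
destruct i; cbv beta iota; field.
Qed.

Lemma DminusSVE_plus_DplusSVE (uL uR : vec) (i : idx) :
  Dminus uL uR i + Dplus uL uR i
  = jump (flux qb uL i) (flux qb uR i)
    + / 2 * (matvec (B uL) (jumpz hb uL uR) i + matvec (B uR) (jumpz hb uL uR) i).
Proof. unfold DminusSVE, DplusSVE, jump; ring. Qed.

Lemma Bmat_avg_jumpz_I2 (uL uR : vec) :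
  / 2 * (matvec (B uL) (jumpz hb uL uR) I2 + matvec (B uR) (jumpz hb uL uR) I2)
  = g * (avg (hh uL) (hh uR) + avg (hbu hb uL) (hbu hb uR)) * jump (hh uL) (hh uR)
    + g * (avg (hh uL) (hh uR) + / r * avg (hbu hb uL) (hbu hb uR)) * jump (bb uL) (bb uR).
Proof. rewrite !matvec_Bmat_jumpz; unfold Bmat, avg, Rdiv; cbv beta iota; ring. Qed.

Lemma entropy_conservative (uL uR : vec) :
  r <> 0 -> (forall h m, 0 < h -> qb h m = m / h * hb h m) ->
  admissible uL -> admissible uR ->
  dot (wvar g r uL) (Dminus uL uR) + dot (wvar g r uR) (Dplus uL uR)
  = eflux g r qb uR - eflux g r qb uL.
Proof.
intros Hr Hq HL HR.
unfold dot, wvar, eflux, DminusSVE, DplusSVE, flux, fstar, matvec, Bmat, jumpz, zvar,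
  mk3, jump, avg, vel, qbu, hbu.
rewrite (Hq _ _ HL), (Hq _ _ HR); unfold admissible, hh, hv, bb in *; cbv beta iota.
field; repeat split; auto using Rgt_not_eq.
Qed.

Lemma is_derive_Bmat_jumpz_shift (u : vec) (j i : idx) :
  is_derive (fun t => matvec (B u) (jumpz hb u (shift u j t)) i) 0 (B u i j).
Proof.
eapply is_derive_ext; [intro t; symmetry; apply matvec_Bmat_jumpz |].
unfold jump, hh, bb, shift; auto_derive; [exact I |].
unfold Bmat, unitv; destruct i, j; cbv beta iota; ring.
Qed.

Lemma is_derive_fstar_shift (u : vec) (j i : idx) :
  C1_on_admissible qb -> admissible u ->
  is_derive (fun t => fstar qb u (shift u j t) i) 0 (/ 2 * flux_jac qb u i j).
Proof.
intros HC Hu; destruct i.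
- exact (is_derive_avg_shift hv u j _ (Derive_correct _ _ (ex_derive_hv_shift u j))).
- pose proof (Derive_correct _ _ (ex_derive_hv_shift u j)) as Hhv.
  pose proof (Derive_correct _ _ (ex_derive_vel_shift u j Hu)) as Hvel.
  replace (flux_jac qb u I2 j)
    with (Derive (fun t => hv (shift u j t)) 0 * vel u
          + hv u * Derive (fun t => vel (shift u j t)) 0).
  + exact (is_derive_avg_mult_shift hv vel u j _ _ Hhv Hvel).
  + symmetry; exact (is_derive_unique _ _ _ (is_derive_mult_shift hv vel u j _ _ Hhv Hvel)).
- exact (is_derive_avg_shift (qbu qb) u j _
    (Derive_correct _ _ (ex_derive_qbu_shift qb u j HC Hu))).
Qed.

Lemma is_derive_DminusSVE_shift (u : vec) (j i : idx) :
  C1_on_admissible qb -> admissible u ->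
  is_derive (fun t => Dminus u (shift u j t) i) 0 (/ 2 * Amat g r qb hb u i j).
Proof.
intros HC Hu.
pose proof (is_derive_minus _ _ _ _ _
  (is_derive_plus _ _ _ _ _
    (is_derive_scal _ _ (/ 2) _ (is_derive_Bmat_jumpz_shift u j i))
    (is_derive_fstar_shift u j i HC Hu))
  (is_derive_const (flux qb u i) 0)) as H.
replace (/ 2 * Amat g r qb hb u i j)
  with (minus (plus (/ 2 * B u i j) (/ 2 * flux_jac qb u i j)) zero); [exact H |].
unfold Amat, minus, plus, opp, zero; simpl; ring.
Qed.

End SaintVenantExner.

Theorem mainTheorem10 (g r : R) (qb hb : R -> R -> R) :
  0 < g -> 0 < r ->
  C1_on_admissible qb ->
  (forall h m, 0 < h -> qb h m = (m / h) * hb h m) ->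
  (* (i) consistency *)
  (forall u, admissible u -> forall i,
      DminusSVE g r qb hb u u i = 0 /\ DplusSVE g r qb hb u u i = 0) /\
  (* (ii) *)
  (forall uL uR, admissible uL -> admissible uR -> forall i,
      DminusSVE g r qb hb uL uR i = - DplusSVE g r qb hb uR uL i) /\
  (* (iii) entropy conservation *)
  (forall uL uR, admissible uL -> admissible uR ->
      dot (wvar g r uL) (DminusSVE g r qb hb uL uR)
      + dot (wvar g r uR) (DplusSVE g r qb hb uL uR)
      = eflux g r qb uR - eflux g r qb uL) /\
  (* (iv) dD^-/du_R at u_R = u_L equals A(u_L)/2, entrywise *)
  (forall uL, admissible uL -> forall i j,
      is_derive (fun t => DminusSVE g r qb hb uL (shift uL j t) i) 0
                (/ 2 * Amat g r qb hb uL i j)) /\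
  (* (v) *)
  (forall uL uR, admissible uL -> admissible uR ->
      (forall i, DminusSVE g r qb hb uL uR i + DplusSVE g r qb hb uL uR i
         = jump (flux qb uL i) (flux qb uR i)
           + / 2 * (matvec (Bmat g r hb uL) (jumpz hb uL uR) i
                    + matvec (Bmat g r hb uR) (jumpz hb uL uR) i)) /\
      / 2 * (matvec (Bmat g r hb uL) (jumpz hb uL uR) I2
             + matvec (Bmat g r hb uR) (jumpz hb uL uR) I2)
      = g * (avg (hh uL) (hh uR) + avg (hbu hb uL) (hbu hb uR)) * jump (hh uL) (hh uR)
        + g * (avg (hh uL) (hh uR) + / r * avg (hbu hb uL) (hbu hb uR)) * jump (bb uL) (bb uR)).
Proof.
intros _ Hr HC Hq.
split; [| split; [| split; [| split]]].
- split; [apply DminusSVE_diag | apply DplusSVE_diag].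
- intros; apply DminusSVE_swap.
- intros; apply entropy_conservative; auto using Rgt_not_eq.
- intros; apply is_derive_DminusSVE_shift; assumption.
- split; [intro; apply DminusSVE_plus_DplusSVE | apply Bmat_avg_jumpz_I2].
Qed.
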